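(* Let $a=\{a_k\}_{k=0}^\infty$ be a real sequence with $1=a_0>a_1\geq a_2\geq\cdots\geq a_{k-1}\geq a_k\geq\cdots$, $\lim_{k\to\infty}a_k=0$, and $\sum_{k=0}^\infty a_k=\infty$. Define $\{b_k\}_{k=0}^\infty$ by $b_0=1/a_0$ and $b_k=-\frac{1}{a_0}\sum_{j=0}^{k-1}a_{k-j}b_j$ for $k\geq1$, and let $u_k=\sum_{j=0}^k b_j$ for $k\geq 0$. Then $\lim_{k\to\infty}u_k=0$.
   Context: The sequence $\{b_k\}$ gives the entries of the inverse $B=A^{-1}$ of the half-infinite lower triangular Toeplitz matrix $A$ with entries $A_{ij}=a_{i-j}$ for $i\geq j$ (and $0$ otherwise); $B$ is again lower triangular Toeplitz with $B_{ij}=b_{i-j}$. The sequence $\{u_k\}$ of partial sums is called the fundamental matrix of $a$. *)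

From Stdlib Require Import Reals Lra Lia List.
From Coquelicot Require Import Coquelicot.
Open Scope R_scope.

Fixpoint sumR (f : nat -> R) (n : nat) : R :=
  match n with O => 0 | S m => sumR f m + f m end.

(* bs a n = [b_n; b_{n-1}; ...; b_0] *)
Fixpoint bs (a : nat -> R) (n : nat) : list R :=
  match n with
  | O => (1 / a 0%nat) :: nil
  | S m =>
      let prev := bs a m in
      let bj := fun j => nth (m - j) prev 0 in
      (- (1 / a 0%nat) * sumR (fun j => a (S m - j)%nat * bj j) (S m)) :: prev
  end.

(* b_k: inverse coefficients of the lower triangular Toeplitz matrix of a *)
Definition b (a : nat -> R) (k : nat) : R := nth 0 (bs a k) 0.

Definition u (a : nat -> R) (k : nat) : R := sumR (b a) (S k).

Lemma bs_length a n : length (bs a n) = S n.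
Proof. induction n; simpl; auto. Qed.

Lemma b_0 a : b a 0 = 1 / a 0%nat.
Proof. reflexivity. Qed.

Lemma nth_bs a m j : (j <= m)%nat -> nth (m - j) (bs a m) 0 = b a j.
Proof.
  intros H. induction m as [|m IH].
  - assert (j = 0%nat) by lia; subst; reflexivity.
  - destruct (Nat.eq_dec j (S m)) as [->|Hn].
    + rewrite Nat.sub_diag; reflexivity.
    + replace (S m - j)%nat with (S (m - j)) by lia. simpl. apply IH; lia.
Qed.

Lemma sumR_ext f g n : (forall j, (j < n)%nat -> f j = g j) -> sumR f n = sumR g n.
Proof. induction n; simpl; intros H; auto. rewrite IHn, H; auto. Qed.

Lemma b_S a k :
  b a (S k) = - (1 / a 0%nat) * sumR (fun j => a (S k - j)%nat * b a j) (S k).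
Proof.
  unfold b at 1; cbn [bs nth]. f_equal. apply sumR_ext. intros j Hj.
  rewrite nth_bs by lia. reflexivity.
Qed.

(* The identity [A B = I] says that the convolution of [a] with the partial sums [u]
   is constantly one: [sum_{k<=n} a_k u_{n-k} = 1] (a renewal equation).  Taking
   differences gives [u_{n+1} = sum_{k<=n} (a_k - a_{k+1}) u_{n-k}], a recurrence with
   nonnegative weights of total mass at most one, so [0 <= u_n <= 1].  Let [l] be the
   limit superior of [u].  Since [a_0 - a_1 > 0] and [a_k -> 0], a value [u_{n+1}]
   close to [l] forces [u_n] close to [l]; iterating, [u_n, ..., u_{n-N}] all exceed
   [l/2].  If [l > 0], choosing [N] with [sum_{k<=N} a_k > 2/l] gives
   [1 = sum_{k<=n} a_k u_{n-k} > 1], a contradiction.  Hence [l = 0]. *)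
From Stdlib Require Import Reals Lra Lia Arith.
From Coquelicot Require Import Coquelicot.
Open Scope R_scope.

Lemma sumR_last f n : sumR f (S n) = sumR f n + f n.
Proof. reflexivity. Qed.

Lemma sumR_shift f n : sumR f (S n) = f 0%nat + sumR (fun j => f (S j)) n.
Proof. induction n as [|n IH]; simpl in *; [lra|]. rewrite IH. lra. Qed.

Lemma sumR_split f m n :
  sumR f (m + n) = sumR f m + sumR (fun j => f (m + j)%nat) n.
Proof. induction n as [|n IH]; simpl; [rewrite Nat.add_0_r; lra|].
  rewrite Nat.add_succ_r; simpl. rewrite IH. lra. Qed.

Lemma sumR_rev f n : sumR f n = sumR (fun j => f (n - 1 - j)%nat) n.
Proof.
  induction n as [|n IH]; [reflexivity|].
  rewrite (sumR_shift (fun j => f (S n - 1 - j)%nat)); simpl sumR at 1.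
  rewrite IH, (sumR_ext (fun j => f (S n - 1 - S j)%nat) (fun j => f (n - 1 - j)%nat)).
  - replace (S n - 1 - 0)%nat with n by lia. lra.
  - intros j _. f_equal. lia.
Qed.

Lemma sumR_le f g n : (forall k, (k < n)%nat -> f k <= g k) -> sumR f n <= sumR g n.
Proof.
  induction n as [|n IH]; simpl; intros H; [lra|].
  pose proof (H n ltac:(lia)). pose proof (IH ltac:(intros; apply H; lia)). lra.
Qed.

Lemma sumR_add f g n : sumR (fun k => f k + g k) n = sumR f n + sumR g n.
Proof. induction n as [|n IH]; simpl; [lra|]. rewrite IH; lra. Qed.

Lemma sumR_sub f g n : sumR (fun k => f k - g k) n = sumR f n - sumR g n.
Proof. induction n as [|n IH]; simpl; [lra|]. rewrite IH; lra. Qed.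

Lemma sumR_scal c f n : sumR (fun k => c * f k) n = c * sumR f n.
Proof. induction n as [|n IH]; simpl; [lra|]. rewrite IH; lra. Qed.

Lemma sumR_telescope f n : sumR (fun k => f k - f (S k)) n = f 0%nat - f n.
Proof. induction n as [|n IH]; simpl; [lra|]. rewrite IH; lra. Qed.

Lemma sum_f_R0_sumR f n : sum_f_R0 f n = sumR f (S n).
Proof. induction n as [|n IH]; simpl in *; [lra|]. rewrite IH. reflexivity. Qed.

Lemma sumR_nonneg f n : (forall k, (k < n)%nat -> 0 <= f k) -> 0 <= sumR f n.
Proof.
  intros H. apply Rle_trans with (sumR (fun _ => 0) n).
  - clear. induction n; simpl; lra.
  - apply sumR_le; auto.
Qed.

Lemma sumR_le_length f m n :
  (m <= n)%nat -> (forall k, 0 <= f k) -> sumR f m <= sumR f n.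
Proof. intros H Hf. induction H as [|n _ IH]; [lra|]. simpl. pose proof (Hf n). lra. Qed.

Section Renewal.
Variable a : nat -> R.
Hypothesis ha0 : a 0%nat = 1.
Hypothesis ha01 : a 0%nat > a 1%nat.
Hypothesis hmono : forall k : nat, (1 <= k)%nat -> a (S k) <= a k.
Hypothesis hlim : is_lim_seq a 0.

Lemma a_decr k : a (S k) <= a k.
Proof. destruct k; [lra|]. apply hmono; lia. Qed.

Lemma a_antitone m n : (m <= n)%nat -> a n <= a m.
Proof. intros H; induction H as [|n _ IH]; [lra|]. pose proof (a_decr n); lra. Qed.

Lemma a_nonneg k : 0 <= a k.
Proof.
  destruct (Rle_or_lt 0 (a k)) as [h|h]; auto. exfalso.
  pose proof (proj2 (is_lim_seq_spec a 0) hlim) as Hlim.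
  destruct (Hlim (mkposreal (- a k) ltac:(lra))) as [N HN].
  specialize (HN (N + k)%nat ltac:(lia)); simpl in HN.
  pose proof (a_antitone k (N + k) ltac:(lia)).
  rewrite Rminus_0_r in HN. apply Rabs_def2 in HN. lra.
Qed.

Definition decrement k := a k - a (S k).

Lemma decrement_nonneg k : 0 <= decrement k.
Proof. unfold decrement. pose proof (a_decr k). lra. Qed.

Lemma sumR_decrement m n :
  sumR (fun j => decrement (m + j)) n = a m - a (m + n)%nat.
Proof.
  unfold decrement.
  rewrite (sumR_ext _ (fun j => a (m + j)%nat - a (m + S j)%nat)).
  - rewrite (sumR_telescope (fun j => a (m + j)%nat)), Nat.add_0_r. reflexivity.
  - intros j _. now rewrite Nat.add_succ_r.
Qed.

Lemma a_conv_b_S n : sumR (fun k => a k * b a (S n - k)%nat) (S (S n)) = 0.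
Proof.
  rewrite sumR_rev, (sumR_ext _ (fun j => a (S n - j)%nat * b a j)).
  - rewrite sumR_last, Nat.sub_diag, b_S, ha0. field.
  - intros j Hj. f_equal; f_equal; lia.
Qed.

Lemma u_S n : u a (S n) = u a n + b a (S n).
Proof. reflexivity. Qed.

Lemma renewal n : sumR (fun k => a k * u a (n - k)%nat) (S n) = 1.
Proof.
  induction n as [|n IH].
  - simpl. unfold u. simpl. rewrite b_0, ha0. field.
  - pose proof (a_conv_b_S n) as Hconv. rewrite sumR_last in Hconv |- *.
    rewrite (sumR_ext _ (fun k => a k * u a (n - k)%nat + a k * b a (S n - k)%nat)).
    + rewrite sumR_add, IH, Nat.sub_diag in *.
      replace (u a 0%nat) with (b a 0) by (unfold u; simpl; ring). lra.
    + intros k Hk. replace (S n - k)%nat with (S (n - k)) by lia. rewrite u_S. ring.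
Qed.

Lemma u_S_recurrence n :
  u a (S n) = sumR (fun k => decrement k * u a (n - k)%nat) (S n).
Proof.
  pose proof (renewal (S n)) as HS. pose proof (renewal n) as Hn.
  rewrite sumR_shift, Nat.sub_0_r, ha0 in HS.
  unfold decrement.
  rewrite (sumR_ext _ (fun k => a k * u a (n - k)%nat - a (S k) * u a (n - k)%nat))
    by (intros; ring).
  change (fun j => a (S j) * u a (S n - S j)%nat) with (fun j => a (S j) * u a (n - j)%nat) in HS.
  rewrite sumR_sub, Hn. lra.
Qed.

Lemma u_bounds n : 0 <= u a n <= 1.
Proof.
  induction n as [n IH] using lt_wf_ind. destruct n as [|n].
  - unfold u. simpl. rewrite b_0, ha0. lra.
  - rewrite u_S_recurrence. split.
    + apply sumR_nonneg. intros k Hk.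
      apply Rmult_le_pos; [apply decrement_nonneg | apply IH; lia].
    + apply Rle_trans with (sumR decrement (S n)).
      * apply sumR_le. intros k Hk.
        pose proof (decrement_nonneg k). pose proof (IH (n - k)%nat ltac:(lia)). nra.
      * unfold decrement. rewrite sumR_telescope. pose proof (a_nonneg (S n)). lra.
Qed.

Section Limsup.
Variable l : R.
Hypothesis hl : 0 <= l.
Hypothesis hub : forall eps : posreal,
  exists N, forall n, (N <= n)%nat -> u a n < l + eps.

(* The weight [a_0 - a_1 > 0] of [u_n] in the recurrence for [u_{n+1}] cannot be
   compensated: the other terms are at most [l + eps] on a window of length [K],
   and beyond it their total weight is at most [a_{K+1}], which is small. *)
Lemma u_near_limsup_pred delta : 0 < delta ->
  exists eta, 0 < eta /\ exists N, forall n, (N <= n)%nat ->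
    u a (S n) > l - eta -> u a n > l - delta.
Proof.
  intros Hd.
  assert (Hq0 : 0 < decrement 0) by (unfold decrement; lra).
  set (e := decrement 0 * delta / 3).
  assert (He : 0 < e) by (unfold e; apply Rmult_lt_0_compat; [nra | lra]).
  exists e. split; [exact He|].
  pose proof (proj2 (is_lim_seq_spec a 0) hlim) as Hlim.
  destruct (Hlim (mkposreal e He)) as [K HK].
  destruct (hub (mkposreal e He)) as [N1 HN1]. simpl in HK, HN1.
  assert (HaK : a (S K) < e).
  { specialize (HK (S K) ltac:(lia)). rewrite Rminus_0_r in HK.
    apply Rabs_def2 in HK. lra. }
  exists (N1 + S K)%nat. intros n Hn Hv.
  set (t := fun j => decrement (S j) * u a (n - S j)%nat).
  rewrite u_S_recurrence, sumR_shift, Nat.sub_0_r in Hv. fold t in Hv.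
  replace n with (K + (n - K))%nat in Hv at 2 by lia. rewrite sumR_split in Hv.
  assert (Hwindow : sumR t K <= (l + e) * (1 - decrement 0)).
  { apply Rle_trans with (sumR (fun j => (l + e) * decrement (S j)) K).
    - apply sumR_le. intros j Hj. unfold t.
      pose proof (decrement_nonneg (S j)). pose proof (HN1 (n - S j)%nat ltac:(lia)). nra.
    - rewrite sumR_scal, (sumR_decrement 1). unfold decrement.
      pose proof (a_nonneg (1 + K)). apply Rmult_le_compat_l; lra. }
  assert (Htail : sumR (fun j => t (K + j)%nat) (n - K) <= a (S K)).
  { apply Rle_trans with (sumR (fun j => decrement (S K + j)) (n - K)).
    - apply sumR_le. intros j _. unfold t. rewrite Nat.add_succ_l.
      pose proof (decrement_nonneg (S (K + j))). pose proof (u_bounds (n - S (K + j))). nra.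
    - rewrite sumR_decrement. pose proof (a_nonneg (S K + (n - K))). lra. }
  assert (decrement 0 * u a n > decrement 0 * (l - delta)) by (unfold e in *; nra).
  apply Rmult_gt_reg_l with (decrement 0); lra.
Qed.

Lemma u_window_near_limsup m delta : 0 < delta ->
  exists eta, 0 < eta /\ exists N, forall n, (N <= n)%nat ->
    u a n > l - eta -> forall k, (k <= m)%nat -> u a (n - k)%nat > l - delta.
Proof.
  revert delta. induction m as [|m IH]; intros delta Hd.
  - exists delta. split; [exact Hd|]. exists 0%nat. intros n _ Hv k Hk.
    now replace (n - k)%nat with n by lia.
  - destruct (u_near_limsup_pred delta Hd) as [e1 [He1 [N1 HN1]]].
    destruct (IH (Rmin delta e1) ltac:(apply Rmin_glb_lt; lra)) as [e2 [He2 [N2 HN2]]].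
    exists e2. split; [exact He2|]. exists (N2 + N1 + S m)%nat. intros n Hn Hv k Hk.
    pose proof (Rmin_l delta e1). pose proof (Rmin_r delta e1).
    destruct (Nat.eq_dec k (S m)) as [->|Hk'].
    + apply HN1; [lia|]. replace (S (n - S m)) with (n - m)%nat by lia.
      pose proof (HN2 n ltac:(lia) Hv m ltac:(lia)). lra.
    + pose proof (HN2 n ltac:(lia) Hv k ltac:(lia)). lra.
Qed.

Hypothesis hfreq : forall eps : posreal, forall N, exists n, (N <= n)%nat /\ l - eps < u a n.
Hypothesis hdiv : is_lim_seq (fun n => sum_f_R0 a n) p_infty.

Lemma limsup_u_nonpos : l <= 0.
Proof.
  destruct (Rle_or_lt l 0) as [|Hpos]; [assumption|exfalso].
  pose proof (proj2 (is_lim_seq_spec _ _) hdiv) as Hdiv. destruct (Hdiv (2 / l)) as [N HN].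
  specialize (HN N (le_n _)).
  destruct (u_window_near_limsup N (l / 2) ltac:(lra)) as [e [He [N0 HN0]]].
  destruct (hfreq (mkposreal e He) (N0 + N)%nat) as [n [Hn Hv]]. simpl in Hv.
  pose proof (HN0 n ltac:(lia) ltac:(lra)) as Hwin.
  pose proof (renewal n) as Hren.
  assert (Hpart : sumR (fun k => a k * u a (n - k)%nat) (S N)
                  <= sumR (fun k => a k * u a (n - k)%nat) (S n)).
  { apply sumR_le_length; [lia|]. intros k.
    apply Rmult_le_pos; [apply a_nonneg | apply u_bounds]. }
  assert (Hlow : sumR (fun k => l / 2 * a k) (S N)
                 <= sumR (fun k => a k * u a (n - k)%nat) (S N)).
  { apply sumR_le. intros k Hk.
    pose proof (Hwin k ltac:(lia)). pose proof (a_nonneg k). nra. }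
  rewrite sumR_scal, <- sum_f_R0_sumR in Hlow.
  assert (l / 2 * sum_f_R0 a N > l / 2 * (2 / l)) by (apply Rmult_gt_compat_l; lra).
  replace (l / 2 * (2 / l)) with 1 in * by (field; lra). lra.
Qed.

End Limsup.
End Renewal.

Theorem theorem1 (a : nat -> R)
  (ha0 : a 0%nat = 1)
  (ha01 : a 0%nat > a 1%nat)
  (hmono : forall k : nat, (1 <= k)%nat -> a (S k) <= a k)
  (hlim : is_lim_seq a 0)
  (hdiv : is_lim_seq (fun n => sum_f_R0 a n) p_infty) :
  is_lim_seq (u a) 0.
Proof.
  pose proof (u_bounds a ha0 ha01 hmono hlim) as Hu.
  destruct (ex_LimSup_seq (u a)) as [[l| |] Hl]; simpl in Hl.
  - assert (Hl0 : 0 <= l).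
    { destruct (Rle_or_lt 0 l); auto. destruct (Hl (mkposreal (- l) ltac:(lra))) as [_ [N HN]].
      specialize (HN N (le_n _)). pose proof (Hu N). simpl in HN. lra. }
    pose proof (limsup_u_nonpos a ha0 ha01 hmono hlim l Hl0
                  (fun eps => proj2 (Hl eps)) (fun eps => proj1 (Hl eps)) hdiv).
    apply is_lim_seq_spec. intros eps. destruct (Hl eps) as [_ [N HN]]. exists N.
    intros n Hn. specialize (HN n Hn). pose proof (Hu n).
    rewrite Rminus_0_r, Rabs_pos_eq by lra. lra.
  - destruct (Hl 1 0%nat) as [n [_ Hn]]. pose proof (Hu n). lra.
  - destruct (Hl 0) as [N HN]. specialize (HN N (le_n _)). pose proof (Hu N). lra.
Qed.
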